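(* Let $g:\mathbb{R}^d\to\mathbb{R}$ be convex and twice differentiable, $\omega:\mathbb{R}_+\to\mathbb{R}_+$ increasing and continuously differentiable with $\omega'(s)\le\gamma\,\omega(s)/s$ for all $s>0$, where $\gamma\ge1$. Let $\alpha\in[0,1)$, $\delta\ge0$, $c>0$ with $8(\alpha+\frac1c)\gamma\le1$. Let $\tilde x\in\mathbb{R}^d$, let $y^*$ be the minimizer of $G(y)=g(y)+\int_0^{\|y-\tilde x\|}\omega(u)u\,du$, and let $y\in\mathbb{R}^d$ satisfy $\|\nabla g(y)+\omega(\|y-\tilde x\|)(y-\tilde x)\|\le\alpha\,\omega(\|y-\tilde x\|)\|y-\tilde x\|+\delta$ and $\omega(\|y-\tilde x\|)\|y-\tilde x\|\ge c\delta$. Then \[ \Big(1-8\big(\alpha+\tfrac1c\big)\gamma\Big)\|y-\tilde x\|\le\|y^*-\tilde x\|\le\Big(1+8\big(\alpha+\tfrac1c\big)\gamma\Big)\|y-\tilde x\|. \] *)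

From Stdlib Require Import Reals Lra ClassicalEpsilon.
Open Scope R_scope.

(* Vectors of R^d are represented as functions nat -> R whose coordinates
   with index >= d vanish (predicate [inRd d]). *)
Definition vec := nat -> R.

Definition inRd (d : nat) (x : vec) : Prop := forall i, (d <= i)%nat -> x i = 0.

Definition vadd (x y : vec) : vec := fun i => x i + y i.
Definition vsub (x y : vec) : vec := fun i => x i - y i.
Definition vscal (a : R) (x : vec) : vec := fun i => a * x i.

Fixpoint sumd (d : nat) (f : nat -> R) : R :=
  match d with O => 0 | S n => sumd n f + f n end.

Definition dot (d : nat) (x y : vec) : R := sumd d (fun i => x i * y i).
Definition norm (d : nat) (x : vec) : R := sqrt (dot d x x).

Definition convex_on_Rd (d : nat) (g : vec -> R) : Prop :=
  forall x y t, inRd d x -> inRd d y -> 0 <= t <= 1 ->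
    g (vadd (vscal t x) (vscal (1 - t) y)) <= t * g x + (1 - t) * g y.

Definition has_gradient (d : nat) (g : vec -> R) (x v : vec) : Prop :=
  inRd d v /\
  forall eps, 0 < eps -> exists del, 0 < del /\
    forall h, inRd d h -> norm d h < del ->
      Rabs (g (vadd x h) - g x - dot d v h) <= eps * norm d h.

Definition is_linear_Rd (d : nat) (L : vec -> vec) : Prop :=
  (forall h, inRd d h -> inRd d (L h)) /\
  (forall a h k, inRd d h -> inRd d k ->
     L (vadd (vscal a h) k) = vadd (vscal a (L h)) (L k)).

Definition has_derivative_map (d : nat) (F : vec -> vec) (x : vec) (L : vec -> vec) : Prop :=
  is_linear_Rd d L /\
  forall eps, 0 < eps -> exists del, 0 < del /\
    forall h, inRd d h -> norm d h < del ->
      norm d (vsub (vsub (F (vadd x h)) (F x)) (L h)) <= eps * norm d h.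

Definition twice_differentiable_with_grad (d : nat) (g : vec -> R) (grad : vec -> vec) : Prop :=
  (forall x, inRd d x -> has_gradient d g x (grad x)) /\
  (forall x, inRd d x -> exists Hx, has_derivative_map d grad x Hx).

(* Riemann integral of f over [a,b] (its value whenever f is Riemann integrable). *)
Definition Rint (f : R -> R) (a b : R) : R :=
  epsilon (inhabits 0) (fun I => exists pr : Riemann_integrable f a b, RiemannInt pr = I).

Definition Gfun (d : nat) (g : vec -> R) (omega : R -> R) (xt : vec) (y : vec) : R :=
  g y + Rint (fun u => omega u * u) 0 (norm d (vsub y xt)).

Definition is_minimizer_Rd (d : nat) (G : vec -> R) (ys : vec) : Prop :=
  inRd d ys /\ forall z, inRd d z -> G ys <= G z.

Definition omega_ok (omega domega : R -> R) : Prop :=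
  (forall s, 0 <= s -> 0 <= omega s) /\
  (forall s t, 0 <= s -> s < t -> omega s < omega t) /\
  (forall s, 0 < s -> derivable_pt_lim omega s (domega s)) /\
  (forall eps, 0 < eps -> exists del, 0 < del /\
     forall h, 0 < h < del -> Rabs ((omega h - omega 0) / h - domega 0) < eps) /\
  (forall s, 0 < s -> continuity_pt domega s) /\
  (forall eps, 0 < eps -> exists del, 0 < del /\
     forall h, 0 <= h < del -> Rabs (domega h - domega 0) < eps).

(* Let u = y - xt, v = ys - xt (ys the minimizer of G = g + Phi(|. - xt|),
   Phi(s) = \int_0^s omega(u) u du) and let e = grad g(y) + omega(|u|) u be
   the residual of the approximate stationary point y.  The proof combines
   - the tangent inequality of the convex function g at y,
   - minimality G(ys) <= G(y), and
   - the parabola bound Phi(s) - Phi(r) >= omega(r) (s^2 - r^2) / 2, valid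
     because omega is increasing,
   into  omega(|u|) |u - v|^2 / 2 <= <e, u - v> <= |e| |u - v|.  Hence a
   residual of relative size eta gives |u - v| <= 2 eta |u|, and the reverse
   triangle inequality yields (1 -+ 2 eta) |u| bounds on |v|; the theorem
   follows with eta = alpha + 1/c, since 2 eta <= 8 eta gamma. *)

From Coquelicot Require Import Coquelicot.
From Stdlib Require Import Reals Lra Psatz FunctionalExtensionality ClassicalEpsilon.
Open Scope R_scope.

Lemma Rabs_le_inv x y : Rabs x <= y -> - y <= x <= y.
Proof.
intros Hxy; pose proof (Rle_abs x); pose proof (Rle_abs (- x)) as Hneg.
rewrite Rabs_Ropp in Hneg; lra.
Qed.

(* A finite sum of a pointwise linear combination is the same combination of
   the finite sums; every algebraic identity on [dot] below reduces to this. *)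
Lemma sumd_linear_comb d f f1 f2 f3 a b c :
  (forall i, f i = a * f1 i + b * f2 i + c * f3 i) ->
  sumd d f = a * sumd d f1 + b * sumd d f2 + c * sumd d f3.
Proof. intros Hf; induction d as [|d IH]; simpl; [ring|]. rewrite IH, Hf; ring. Qed.

Lemma sumd_nonneg d f : (forall i, 0 <= f i) -> 0 <= sumd d f.
Proof. intros Hf; induction d as [|d IH]; simpl; [lra|]. specialize (Hf d); lra. Qed.

Section InnerProduct.
Variable d : nat.

Lemma dot_self_nonneg x : 0 <= dot d x x.
Proof. apply sumd_nonneg; intros i; apply Rle_0_sqr. Qed.

Lemma norm_nonneg x : 0 <= norm d x.
Proof. apply sqrt_pos. Qed.

Lemma norm_sq x : norm d x * norm d x = dot d x x.
Proof. apply sqrt_sqrt, dot_self_nonneg. Qed.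

Lemma dot_scal_r t x y : dot d x (vscal t y) = t * dot d x y.
Proof.
unfold dot; rewrite (sumd_linear_comb _ _ (fun i => x i * y i) (fun _ => 0) (fun _ => 0) t 0 0).
- simpl; ring.
- intros i; unfold vscal; ring.
Qed.

Lemma norm_scal t x : 0 <= t -> norm d (vscal t x) = t * norm d x.
Proof.
intros Ht; unfold norm.
replace (dot d (vscal t x) (vscal t x)) with ((t * t) * dot d x x).
- rewrite sqrt_mult, sqrt_square by (auto using dot_self_nonneg; nra); reflexivity.
- rewrite dot_scal_r; unfold dot.
  rewrite (sumd_linear_comb d (fun i => vscal t x i * x i) (fun i => x i * x i)
             (fun _ => 0) (fun _ => 0) t 0 0); [simpl; ring|].
  intros i; unfold vscal; ring.
Qed.

Lemma nonneg_quadratic_discriminant A B C :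
  0 <= A -> 0 <= B -> (forall t, 0 <= A + 2 * t * C + t * t * B) -> C * C <= A * B.
Proof.
intros HA HB Hq.
destruct (Req_dec B 0) as [HB0|HB0].
- subst B. destruct (Req_dec C 0) as [HC0|HC0]; [subst C; lra|].
  specialize (Hq (- (A + 1) / (2 * C))).
  replace (A + 2 * (- (A + 1) / (2 * C)) * C + - (A + 1) / (2 * C) * (- (A + 1) / (2 * C)) * 0)
    with (-1) in Hq by (field; assumption). lra.
- specialize (Hq (- C / B)).
  replace (A + 2 * (- C / B) * C + - C / B * (- C / B) * B) with (A - C * C / B) in Hq
    by (field; assumption).
  assert (Hle : C * C / B * B <= A * B) by (apply Rmult_le_compat_r; lra).
  replace (C * C / B * B) with (C * C) in Hle by (field; assumption). lra.
Qed.

Lemma cauchy_schwarz x y : Rabs (dot d x y) <= norm d x * norm d y.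
Proof.
assert (Hsq : dot d x y * dot d x y <= dot d x x * dot d y y).
{ apply nonneg_quadratic_discriminant; try apply dot_self_nonneg. intros t.
  replace (dot d x x + 2 * t * dot d x y + t * t * dot d y y)
    with (dot d (vadd x (vscal t y)) (vadd x (vscal t y))) by
    (unfold dot; rewrite (sumd_linear_comb _ _ (fun i => x i * x i) (fun i => x i * y i)
       (fun i => y i * y i) 1 (2 * t) (t * t)); [ring | intros i; unfold vadd, vscal; ring]).
  apply dot_self_nonneg. }
rewrite <- (sqrt_Rsqr_abs (dot d x y)); unfold norm.
rewrite <- sqrt_mult by apply dot_self_nonneg.
apply sqrt_le_1_alt; unfold Rsqr; lra.
Qed.

Lemma dot_self_around u v :
  dot d v v = dot d u u - 2 * dot d u (vsub u v) + dot d (vsub u v) (vsub u v).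
Proof.
unfold dot; rewrite (sumd_linear_comb d _ (fun i => u i * u i) (fun i => u i * vsub u v i)
  (fun i => vsub u v i * vsub u v i) 1 (-2) 1); [ring|].
intros i; unfold vsub; ring.
Qed.

Lemma norm_reverse_triangle u v :
  norm d u - norm d (vsub u v) <= norm d v <= norm d u + norm d (vsub u v).
Proof.
pose proof (dot_self_around u v) as Hexp. rewrite <- !norm_sq in Hexp.
pose proof (cauchy_schwarz u (vsub u v)) as Hcs.
pose proof (Rle_abs (dot d u (vsub u v))) as Habs1.
pose proof (Rle_abs (- dot d u (vsub u v))) as Habs2. rewrite Rabs_Ropp in Habs2.
pose proof (norm_nonneg u); pose proof (norm_nonneg v); pose proof (norm_nonneg (vsub u v)).
split; nra.
Qed.

End InnerProduct.

Lemma convex_tangent d g p y z :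
  convex_on_Rd d g -> has_gradient d g y p -> inRd d y -> inRd d z ->
  g y + dot d p (vsub z y) <= g z.
Proof.
intros Hconv [_ Hgrad] Hy Hz.
set (h := vsub z y); set (N := norm d h).
assert (HN : 0 <= N) by apply norm_nonneg.
cut (dot d p h <= g z - g y); [lra|].
apply le_epsilon; intros eps Heps.
destruct (Hgrad (eps / (N + 1))) as [del [Hdel Hd]]; [apply Rdiv_lt_0_compat; lra|].
set (t := Rmin 1 (del / (2 * (N + 1)))).
assert (Ht0 : 0 < t) by (apply Rmin_glb_lt; [lra | apply Rdiv_lt_0_compat; lra]).
assert (Ht1 : t <= 1) by apply Rmin_l.
assert (Ht2 : t <= del / (2 * (N + 1))) by apply Rmin_r.
assert (Hth : inRd d (vscal t h)).
{ intros i Hi; unfold vscal, h, vsub; rewrite Hy, Hz by auto; ring. }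
assert (Hsmall : norm d (vscal t h) < del).
{ rewrite norm_scal by lra.
  assert (t * (2 * (N + 1)) <= del) by
    (apply (Rmult_le_compat_r (2 * (N + 1))) in Ht2; [|lra];
     replace (del / (2 * (N + 1)) * (2 * (N + 1))) with del in Ht2 by (field; lra); lra).
  fold N; assert (0 < t * (N + 2)) by (apply Rmult_lt_0_compat; lra). nra. }
(* the gradient bounds the chord from below ... *)
specialize (Hd _ Hth Hsmall).
rewrite norm_scal, dot_scal_r in Hd by lra.
apply Rabs_le_inv in Hd.
(* ... and convexity bounds it from above *)
replace (vadd y (vscal t h)) with (vadd (vscal t z) (vscal (1 - t) y)) in Hd
  by (apply functional_extensionality; intros i; unfold vadd, vscal, h, vsub; ring).
pose proof (Hconv z y t Hz Hy (conj (Rlt_le _ _ Ht0) Ht1)) as Hchord.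
assert (Hfrac : eps / (N + 1) * N <= eps).
{ apply Rle_trans with (eps / (N + 1) * (N + 1)); [apply Rmult_le_compat_l; [apply Rlt_le, Rdiv_lt_0_compat|]; lra|].
  right; field; lra. }
assert (eps / (N + 1) * (t * N) <= t * eps) by
  (replace (eps / (N + 1) * (t * N)) with (t * (eps / (N + 1) * N)) by ring;
   apply Rmult_le_compat_l; lra).
apply Rmult_le_reg_l with t; [lra|]. fold N in Hd. lra.
Qed.
Lemma Rint_RInt f a b : ex_RInt f a b -> Rint f a b = RInt f a b.
Proof.
intros Hex; unfold Rint.
destruct (epsilon_spec (inhabits 0)
  (fun I => exists pr : Riemann_integrable f a b, RiemannInt pr = I)) as [pr Hpr].
- exists (RInt f a b), (ex_RInt_Reals_0 _ _ _ Hex); symmetry; apply RInt_Reals.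
- rewrite <- Hpr, (RInt_Reals _ _ _ pr); reflexivity.
Qed.

Lemma continuity_pt_bounded_mul (f h : R -> R) u M :
  (forall x, Rabs (x - u) < 1 -> Rabs (f x) <= M) ->
  continuity_pt h u -> h u = 0 -> continuity_pt (fun x => f x * h x) u.
Proof.
intros Hbound Hh Hhu eps Heps.
assert (HM : 0 <= M) by (specialize (Hbound u); rewrite Rminus_diag, Rabs_R0 in Hbound;
  pose proof (Rabs_pos (f u)); lra).
destruct (Hh (eps / (M + 1))) as [del [Hdel Hclose]]; [apply Rdiv_lt_0_compat; lra|].
exists (Rmin 1 del); split; [apply Rmin_glb_lt; lra|].
intros x [Hx_ne Hx]; simpl in *; unfold R_dist in *.
rewrite Hhu, Rmult_0_r, Rminus_0_r, Rabs_mult.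
assert (Hfx : Rabs (f x) <= M) by (apply Hbound; pose proof (Rmin_l 1 del); lra).
assert (Hhx : Rabs (h x) < eps / (M + 1)).
{ specialize (Hclose x); rewrite Hhu, Rminus_0_r in Hclose; apply Hclose.
  split; [exact Hx_ne | pose proof (Rmin_r 1 del); lra]. }
apply Rle_lt_trans with (M * (eps / (M + 1))).
- apply Rmult_le_compat; auto using Rabs_pos; lra.
- apply Rmult_lt_reg_r with (M + 1); [lra|].
  replace (M * (eps / (M + 1)) * (M + 1)) with (M * eps) by (field; lra). nra.
Qed.

Lemma is_RInt_linear k a b : is_RInt (fun u => k * u) a b (k * (b * b - a * a) / 2).
Proof.
replace (k * (b * b - a * a) / 2)
  with (minus (k * (b * b) / 2) (k * (a * a) / 2))
  by (unfold minus, plus, opp; simpl; field).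
apply (is_RInt_derive (V := R_CompleteNormedModule) (fun u => k * (u * u) / 2)).
- intros x _; auto_derive; [exact I | field].
- intros x _; apply continuity_pt_filterlim, continuity_pt_mult;
    [apply continuity_pt_const; intros ? ?; reflexivity | apply derivable_continuous_pt, derivable_pt_id].
Qed.

Lemma RInt_le_oriented f h r s :
  ex_RInt f r s -> ex_RInt h r s ->
  (forall u, Rmin r s < u < Rmax r s -> (r <= u -> h u <= f u) /\ (u <= r -> f u <= h u)) ->
  RInt h r s <= RInt f r s.
Proof.
intros Hf Hh Hcmp.
destruct (Rle_or_lt r s) as [Hrs|Hsr].
- apply RInt_le; auto.
  intros u Hu; apply Hcmp; [rewrite Rmin_left, Rmax_right|]; lra.
- rewrite <- (opp_RInt_swap f), <- (opp_RInt_swap h) by now apply ex_RInt_swap.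
  unfold opp; simpl; apply Ropp_le_contravar.
  apply RInt_le; [lra | now apply ex_RInt_swap | now apply ex_RInt_swap|].
  intros u Hu; apply Hcmp; [rewrite Rmin_right, Rmax_left|]; lra.
Qed.

Section Potential.
Variable om : R -> R.
Hypothesis om_nonneg : forall s, 0 <= s -> 0 <= om s.
Hypothesis om_incr : forall s t, 0 <= s -> s < t -> om s < om t.
Hypothesis om_cont : forall s, 0 < s -> continuity_pt om s.

Definition potential (s : R) : R := RInt (fun u => om u * u) 0 s.

Lemma om_le s t : 0 <= s -> s <= t -> om s <= om t.
Proof. intros Hs Hst; destruct (Req_dec s t); [subst; lra | left; apply om_incr; lra]. Qed.

(* The integrand clipped to [0, +oo), which is continuous on the whole line;
   it serves only to prove integrability of [u |-> om u * u] on [0, +oo). *)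
Let pos_part (u : R) : R := (u + Rabs u) / 2.
Let clipped (u : R) : R := om (pos_part u) * pos_part u.

Lemma pos_part_cont u : continuity_pt pos_part u.
Proof.
apply continuity_pt_mult; [apply continuity_pt_plus|].
- apply derivable_continuous_pt, derivable_pt_id.
- apply Rcontinuity_abs.
- apply continuity_pt_const; intros ? ?; reflexivity.
Qed.

Lemma pos_part_id u : 0 <= u -> pos_part u = u.
Proof. intros Hu; unfold pos_part; rewrite Rabs_right; lra. Qed.

Lemma pos_part_bounds u : 0 <= pos_part u /\ (u <= 0 -> pos_part u = 0).
Proof.
unfold pos_part; pose proof (Rle_abs (- u)) as Hn.
rewrite Rabs_Ropp in Hn; split; [lra|].
intros Hu; rewrite Rabs_left1; lra.
Qed.

Lemma clipped_cont u : continuity_pt clipped u.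
Proof.
destruct (Rlt_or_le 0 u) as [Hu|Hu].
- apply continuity_pt_mult; [|apply pos_part_cont].
  apply (continuity_pt_comp pos_part om); [apply pos_part_cont|].
  rewrite pos_part_id by lra; apply om_cont; lra.
- (* near a point [u <= 0] the clipped weight stays in [0, om 1] *)
  apply continuity_pt_bounded_mul with (om 1); [|apply pos_part_cont|apply pos_part_bounds; lra].
  intros x Hx; apply Rabs_def2 in Hx.
  destruct (pos_part_bounds x) as [Hp0 Hpneg].
  rewrite Rabs_right by (apply Rle_ge, om_nonneg; lra).
  apply om_le; [lra|].
  destruct (Rle_or_lt x 0) as [Hx0|Hx0]; [rewrite Hpneg; lra | rewrite pos_part_id; lra].
Qed.

Lemma potential_integrable a b : 0 <= a -> 0 <= b -> ex_RInt (fun u => om u * u) a b.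
Proof.
intros Ha Hb; apply ex_RInt_ext with clipped.
- intros x [Hx _]; unfold clipped; rewrite pos_part_id; [reflexivity|].
  pose proof (Rmin_glb a b 0); lra.
- apply (ex_RInt_continuous (V := R_CompleteNormedModule)); intros z _.
  apply continuity_pt_filterlim, clipped_cont.
Qed.

Lemma potential_zero : potential 0 = 0.
Proof. apply (RInt_point (V := R_CompleteNormedModule)). Qed.

(* Key convexity estimate for the potential: since [om] is increasing, the
   potential lies above its "frozen-weight" tangent parabola at [r]:
   [Phi(s) - Phi(r) >= om(r) (s^2 - r^2) / 2]. *)
Lemma potential_increment r s : 0 <= r -> 0 <= s ->
  om r * (s * s - r * r) / 2 <= potential s - potential r.
Proof.
intros Hr Hs.
assert (Hchasles : potential s - potential r = RInt (fun u => om u * u) r s).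
{ unfold potential; rewrite <- (RInt_Chasles (V := R_CompleteNormedModule) _ 0 r s)
    by (apply potential_integrable; lra).
  unfold plus; simpl; ring. }
rewrite Hchasles, <- (is_RInt_unique _ _ _ _ (is_RInt_linear (om r) r s)).
apply RInt_le_oriented.
- apply potential_integrable; lra.
- eexists; apply is_RInt_linear.
- intros u Hu; assert (0 <= u) by (pose proof (Rmin_glb r s 0); lra).
  split; intros; apply Rmult_le_compat_r; auto; apply om_le; lra.
Qed.

Lemma potential_pos s : 0 < s -> 0 < potential s.
Proof.
intros Hs.
pose proof (potential_increment 0 (s / 2)) as Hhalf.
pose proof (potential_increment (s / 2) s) as Hupper.
rewrite potential_zero in Hhalf.
assert (0 <= om 0) by (apply om_nonneg; lra).
assert (0 < om (s / 2)) by (apply Rle_lt_trans with (om 0); [|apply om_incr]; lra).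
assert (0 < om (s / 2) * (s * s - s / 2 * (s / 2))) by (apply Rmult_lt_0_compat; nra).
assert (0 <= om 0 * (s / 2 * (s / 2) - 0 * 0)) by (apply Rmult_le_pos; nra).
lra.
Qed.
End Potential.

Section MinimizerResidual.
Variables (d : nat) (g : vec -> R) (om : R -> R) (xt y ys p : vec).
Hypothesis om_nonneg : forall s, 0 <= s -> 0 <= om s.
Hypothesis om_incr : forall s t, 0 <= s -> s < t -> om s < om t.
Hypothesis om_cont : forall s, 0 < s -> continuity_pt om s.
Hypothesis g_convex : convex_on_Rd d g.
Hypothesis g_grad : has_gradient d g y p.
Hypothesis y_in : inRd d y.
Hypothesis ys_in : inRd d ys.
Hypothesis ys_better :
  g ys + potential om (norm d (vsub ys xt)) <= g y + potential om (norm d (vsub y xt)).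

Let u := vsub y xt.
Let v := vsub ys xt.
Let w := vsub u v.
Let e := vadd p (vscal (om (norm d u)) u).

(* Tangent inequality for [g] at [y] combined with [G(ys) <= G(y)]. *)
Lemma residual_inequality :
  potential om (norm d v) - potential om (norm d u) + om (norm d u) * dot d u w <= dot d e w.
Proof.
pose proof (convex_tangent d g p y ys g_convex g_grad y_in ys_in) as Htan.
assert (Hdir : dot d p (vsub ys y) = om (norm d u) * dot d u w - dot d e w).
{ unfold dot; rewrite (sumd_linear_comb d _ (fun i => u i * w i) (fun i => e i * w i)
    (fun _ => 0) (om (norm d u)) (-1) 0); [ring|].
  intros i; unfold e, w, u, v, vsub, vadd, vscal; ring. }
fold u v in ys_better; lra.
Qed.

(* Using the parabola bound on the potential, the residual dominates
   [om(|u|) |w|^2 / 2]. *)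
Lemma residual_coercive : om (norm d u) * (norm d w * norm d w) / 2 <= dot d e w.
Proof.
pose proof residual_inequality as Hres.
pose proof (potential_increment om om_nonneg om_incr om_cont (norm d u) (norm d v)
  (norm_nonneg d u) (norm_nonneg d v)) as Hinc.
pose proof (dot_self_around d u v) as Hexp; fold w in Hexp; rewrite <- !norm_sq in Hexp.
replace (norm d v * norm d v - norm d u * norm d u)
  with (norm d w * norm d w - 2 * dot d u w) in Hinc by lra.
lra.
Qed.

(* Degenerate case: if [y = xt] is an exact stationary point, so is [ys = xt],
   because the potential is positive away from the origin. *)
Lemma minimizer_at_center : norm d u = 0 -> norm d e = 0 -> norm d v = 0.
Proof.
intros Hu He.
pose proof residual_inequality as Hres.
pose proof (cauchy_schwarz d u w) as Huw; pose proof (cauchy_schwarz d e w) as Hew.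
rewrite Hu, Rmult_0_l in Huw; rewrite He, Rmult_0_l in Hew.
apply Rabs_le_inv in Huw; apply Rabs_le_inv in Hew.
assert (Hcross : om (norm d u) * dot d u w = 0) by (replace (dot d u w) with 0 by lra; ring).
rewrite Hcross, Hu, potential_zero in Hres.
destruct (Rle_lt_or_eq_dec 0 (norm d v) (norm_nonneg d v)) as [Hv|Hv]; [|auto].
pose proof (potential_pos om om_nonneg om_incr om_cont (norm d v) Hv).
lra.
Qed.

Lemma minimizer_norm_bounds eta :
  0 <= eta -> norm d e <= eta * om (norm d u) * norm d u ->
  (1 - 2 * eta) * norm d u <= norm d v <= (1 + 2 * eta) * norm d u.
Proof.
intros Heta He.
pose proof (norm_nonneg d u) as Hu0; pose proof (norm_nonneg d e) as He0.
destruct (Rle_lt_or_eq_dec 0 (norm d u) Hu0) as [Hu|Hu].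
- assert (Hom : 0 < om (norm d u)).
  { apply Rle_lt_trans with (om 0); [apply om_nonneg | apply om_incr]; lra. }
  assert (Hw : norm d w <= 2 * eta * norm d u).
  { pose proof residual_coercive as Hcoer.
    pose proof (Rabs_le_inv _ _ (cauchy_schwarz d e w)) as [_ Hcs].
    assert (Hew : norm d e * norm d w <= eta * om (norm d u) * norm d u * norm d w)
      by (apply Rmult_le_compat_r; [apply norm_nonneg | exact He]).
    destruct (Rle_lt_or_eq_dec 0 (norm d w) (norm_nonneg d w)) as [Hw0|Hw0]; [|nra].
    apply Rmult_le_reg_l with (om (norm d u) * norm d w); [apply Rmult_lt_0_compat; lra|].
    nra. }
  pose proof (norm_reverse_triangle d u v) as Htri; fold w in Htri.
  split; nra.
- rewrite <- Hu in He |- *.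
  rewrite minimizer_at_center by (auto; nra).
  lra.
Qed.

End MinimizerResidual.

Theorem mainTheorem18
  (d : nat) (g : vec -> R) (grad : vec -> vec)
  (omega domega : R -> R) (gamma alpha delta c : R)
  (xt ystar y : vec)
  (Hconv : convex_on_Rd d g)
  (Hg2 : twice_differentiable_with_grad d g grad)
  (Homega : omega_ok omega domega)
  (Hgamma : 1 <= gamma)
  (Hratio : forall s, 0 < s -> domega s <= gamma * omega s / s)
  (Halpha : 0 <= alpha < 1)
  (Hdelta : 0 <= delta)
  (Hc : 0 < c)
  (Hsmall : 8 * (alpha + 1 / c) * gamma <= 1)
  (Hxt : inRd d xt)
  (Hystar : is_minimizer_Rd d (Gfun d g omega xt) ystar)
  (Hy : inRd d y)
  (Happrox : norm d (vadd (grad y) (vscal (omega (norm d (vsub y xt))) (vsub y xt)))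
             <= alpha * omega (norm d (vsub y xt)) * norm d (vsub y xt) + delta)
  (Hlarge : omega (norm d (vsub y xt)) * norm d (vsub y xt) >= c * delta) :
  (1 - 8 * (alpha + 1 / c) * gamma) * norm d (vsub y xt) <= norm d (vsub ystar xt) /\
  norm d (vsub ystar xt) <= (1 + 8 * (alpha + 1 / c) * gamma) * norm d (vsub y xt).
Proof.
destruct Homega as [om_nonneg [om_incr [om_deriv _]]].
assert (om_cont : forall s, 0 < s -> continuity_pt omega s)
  by (intros s Hs; apply derivable_continuous_pt; exact (exist _ _ (om_deriv s Hs))).
destruct Hystar as [Hys Hmin]; specialize (Hmin y Hy); unfold Gfun in Hmin.
rewrite !Rint_RInt in Hmin by (apply potential_integrable; auto using norm_nonneg; lra).
set (r := norm d (vsub y xt)) in *.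
set (eta := alpha + 1 / c).
assert (Hinvc : 0 < 1 / c) by (apply Rdiv_lt_0_compat; lra).
assert (Hdelta_rel : delta <= 1 / c * omega r * r).
{ apply Rmult_le_reg_l with c; [lra|].
  replace (c * (1 / c * omega r * r)) with (omega r * r) by (field; lra); lra. }
pose proof (minimizer_norm_bounds d g omega xt y ystar (grad y) om_nonneg om_incr om_cont
  Hconv (proj1 Hg2 y Hy) Hy Hys Hmin eta) as Hbounds.
fold r in Hbounds.
destruct Hbounds as [Hlo Hhi]; [unfold eta; lra | unfold eta; lra|].
assert (Hr : 0 <= r) by apply norm_nonneg.
(* the estimate with factor [2 eta] is sharper than the claimed [8 eta gamma] *)
assert (2 * eta * r <= 8 * eta * gamma * r) by (unfold eta in *; nra).
unfold eta in *; split; nra.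
Qed.
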